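(* Let $n\geq1$ be an integer, $p>1$, $q=pe^{2\pi i/n}$, and let $A=\{a_1,\dots,a_m\}\subset\mathbb R$ with $a_1<a_2<\cdots<a_m$. Let $X_{n,p}=\{\sum_{k=0}^{n-1}x_kq^k\mid x_k\in\{0,1\}\}$ and $P_{n,p}=\mathrm{conv}(X_{n,p})$. If $$\max_{i=1,\dots,m-1}(a_{i+1}-a_i)\leq\frac{\max A-\min A}{p^n-1},$$ then every $$x\in\frac{\max A-\min A}{p^n-1}\,P_{n,p}+\frac{1}{p^n-1}\sum_{k=0}^{n-1}(\min A)\,q^k$$ has a representation in base $q$ with alphabet $A$, i.e. there is a sequence $(x_j)_{j\geq1}$ with $x_j\in A$ and $x=\sum_{j=1}^\infty x_jq^{-j}$.
   Context: $\mathrm{conv}$ denotes convex hull in $\mathbb C\cong\mathbb R^2$; for $Y\subset\mathbb C$, $c\in\mathbb R$, $d\in\mathbb C$: $cY+d=\{cy+d\mid y\in Y\}$. *)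

From Stdlib Require Import Reals List.
From Coquelicot Require Import Coquelicot.
Open Scope R_scope.

Definition conv (S : C -> Prop) (z : C) : Prop :=
  exists l : list (R * C),
    List.Forall (fun w => 0 <= fst w /\ S (snd w)) l /\
    List.fold_right Rplus 0 (List.map fst l) = 1 /\
    z = List.fold_right Cplus 0%C (List.map (fun w => Cmult (RtoC (fst w)) (snd w)) l).

(* q = p e^{2 pi i / n}, written via Euler's formula *)
Definition qbase (n : nat) (p : R) : C :=
  (p * cos (2 * PI / INR n), p * sin (2 * PI / INR n)).

Definition Csum (n : nat) (f : nat -> C) : C :=
  List.fold_right Cplus 0%C (List.map f (List.seq 0 n)).

Definition Xset (n : nat) (p : R) (z : C) : Prop :=
  exists x : nat -> R, (forall k, x k = 0 \/ x k = 1) /\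
    z = Csum n (fun k => Cmult (RtoC (x k)) (Cpow (qbase n p) k)).

Definition Pset (n : nat) (p : R) : C -> Prop := conv (Xset n p).

(* Write b := p^n = q^n.  A point of the target set is
   r = sum_{k<n} s_k q^k with every coefficient s_k in [L, U],
   L = min A / (b - 1), U = max A / (b - 1).  Multiplying by q shifts the
   coefficients up one place, and the top one lands on q^n = b, i.e. in the
   constant term, which becomes b s_{n-1}.  The gap condition allows a digit
   d in A with b s_{n-1} - d back in [L, U]; so q r - d is again in the set.
   Iterating gives r_{j+1} = q r_j - d_j with (r_j) bounded, hence
   x = sum_{j<N} d_j q^{-(j+1)} + q^{-N} r_N and the remainder vanishes since
   |q| = p > 1. *)

From Stdlib Require Import Reals List Lia Lra ClassicalEpsilon.
From Coquelicot Require Import Coquelicot.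
Open Scope R_scope.

Lemma fold_right_Cplus (l : list C) (c : C) :
  fold_right Cplus c l = Cplus (fold_right Cplus 0%C l) c.
Proof. induction l as [|z l IH]; simpl; [ring | rewrite IH; ring]. Qed.

Lemma Csum_S n f : Csum (S n) f = Cplus (Csum n f) (f n).
Proof.
  unfold Csum. rewrite seq_S, map_app, fold_right_app. simpl.
  rewrite fold_right_Cplus. f_equal. ring.
Qed.

Lemma Csum_0 f : Csum 0 f = 0%C.
Proof. reflexivity. Qed.

Lemma Csum_ext n f g : (forall k, (k < n)%nat -> f k = g k) -> Csum n f = Csum n g.
Proof.
  induction n as [|n IH]; intros H; [reflexivity|].
  rewrite !Csum_S, IH, H; auto.
Qed.

Lemma Csum_shift n f : Csum (S n) f = Cplus (f 0%nat) (Csum n (fun k => f (S k))).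
Proof.
  induction n as [|n IH]; [rewrite Csum_S, !Csum_0; ring|].
  rewrite Csum_S, IH, Csum_S. ring.
Qed.

Lemma Csum_plus n f g :
  Csum n (fun k => Cplus (f k) (g k)) = Cplus (Csum n f) (Csum n g).
Proof. induction n as [|n IH]; [rewrite !Csum_0; ring | rewrite !Csum_S, IH; ring]. Qed.

Lemma Csum_scal n c f : Cmult c (Csum n f) = Csum n (fun k => Cmult c (f k)).
Proof. induction n as [|n IH]; [rewrite !Csum_0; ring | rewrite !Csum_S, <- IH; ring]. Qed.

Lemma Csum_const0 n : Csum n (fun _ => 0%C) = 0%C.
Proof. induction n as [|n IH]; [reflexivity | rewrite Csum_S, IH; ring]. Qed.

Lemma Cmod_Csum_le n f B :
  (forall k, (k < n)%nat -> Cmod (f k) <= B) -> Cmod (Csum n f) <= INR n * B.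
Proof.
  induction n as [|n IH]; intros H; [rewrite Csum_0, Cmod_0; simpl; lra|].
  rewrite Csum_S, S_INR. eapply Rle_trans; [apply Cmod_triangle|].
  assert (IHn := IH (fun k Hk => H k (Nat.lt_lt_succ_r _ _ Hk))).
  assert (Hn := H n (Nat.lt_succ_diag_r n)). lra.
Qed.

Lemma sum_n_Csum (c : nat -> C) N : sum_n c N = Csum (S N) c.
Proof.
  induction N as [|N IH].
  - rewrite sum_O, Csum_S, Csum_0. simpl. ring.
  - rewrite sum_Sn, IH, (Csum_S (S N)). reflexivity.
Qed.

Lemma Cpow_polar r t k :
  Cpow (r * cos t, r * sin t) k = (r ^ k * cos (INR k * t), r ^ k * sin (INR k * t)).
Proof.
  induction k as [|k IH]; simpl Cpow.
  - simpl. rewrite Rmult_0_l, cos_0, sin_0. apply injective_projections; simpl; ring.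
  - rewrite IH, S_INR, Rmult_plus_distr_r, Rmult_1_l, cos_plus, sin_plus.
    apply injective_projections; simpl; ring.
Qed.

Lemma qbase_pow_n n p : (1 <= n)%nat -> Cpow (qbase n p) n = RtoC (p ^ n).
Proof.
  intros Hn. unfold qbase. rewrite Cpow_polar.
  replace (INR n * (2 * PI / INR n)) with (2 * PI)
    by (field; apply not_0_INR; lia).
  rewrite cos_2PI, sin_2PI. apply injective_projections; simpl; ring.
Qed.

Lemma Cmod_qbase n p : 0 < p -> Cmod (qbase n p) = p.
Proof.
  intros Hp. unfold qbase, Cmod. cbn [fst snd].
  replace ((p * cos (2 * PI / INR n)) ^ 2 + (p * sin (2 * PI / INR n)) ^ 2) with (p ^ 2).
  - apply sqrt_pow2; lra.
  - rewrite <- (Rmult_1_r (p ^ 2)) at 1. rewrite <- (sin2_cos2 (2 * PI / INR n)).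
    unfold Rsqr. ring.
Qed.

Lemma sorted_nth_le (a : list R) :
  (forall i, (S i < length a)%nat -> nth i a 0 < nth (S i) a 0) ->
  forall i j, (j < length a)%nat -> (i <= j)%nat -> nth i a 0 <= nth j a 0.
Proof.
  intros Hs i j. induction j as [|j IH]; intros Hj Hij.
  - replace i with 0%nat by lia. lra.
  - destruct (Nat.eq_dec i (S j)); [subst; lra|].
    specialize (IH ltac:(lia) ltac:(lia)). specialize (Hs j Hj). lra.
Qed.

(* Scan the list upwards: the first element reaching [v - D] is at most [v],
   since it is either [nth 0 a 0] or at most [D] above an element below [v - D]. *)
Lemma exists_nth_window (a : list R) (D v : R) :
  (1 <= length a)%nat ->
  (forall i, (S i < length a)%nat -> nth (S i) a 0 - nth i a 0 <= D) ->
  nth 0 a 0 <= v -> v - D <= nth (length a - 1) a 0 ->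
  exists i, (i < length a)%nat /\ v - D <= nth i a 0 <= v.
Proof.
  intros Hm Hg H0 H1.
  assert (Hscan : forall k, (k < length a)%nat ->
    (exists i, (i < length a)%nat /\ v - D <= nth i a 0 <= v) \/ nth k a 0 <= v).
  { induction k as [|k IH]; intros Hk; [right; exact H0|].
    destruct (IH ltac:(lia)) as [Hi|Hk']; [left; exact Hi|].
    destruct (Rle_lt_dec (v - D) (nth k a 0)).
    - left. exists k. split; [lia | lra].
    - right. specialize (Hg k Hk). lra. }
  destruct (Hscan (length a - 1)%nat ltac:(lia)) as [Hi|Hlast]; [exact Hi|].
  exists (length a - 1)%nat. split; [lia | lra].
Qed.

Lemma exists_digit_map (a : list R) (b : R) :
  (1 <= length a)%nat -> 1 < b ->
  (forall i, (S i < length a)%nat ->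
     nth (S i) a 0 - nth i a 0 <= (nth (length a - 1) a 0 - nth 0 a 0) / (b - 1)) ->
  let L := nth 0 a 0 / (b - 1) in
  let U := nth (length a - 1) a 0 / (b - 1) in
  exists f : R -> R, forall v, L <= v <= U -> In (f v) a /\ L <= b * v - f v <= U.
Proof.
  intros Hm Hb Hg L U.
  assert (HL : L * (b - 1) = nth 0 a 0) by (unfold L; field; lra).
  assert (HU : U * (b - 1) = nth (length a - 1) a 0) by (unfold U; field; lra).
  replace ((nth (length a - 1) a 0 - nth 0 a 0) / (b - 1)) with (U - L) in Hg
    by (unfold U, L; field; lra).
  assert (Hpick : forall v, exists c, L <= v <= U -> In c a /\ L <= b * v - c <= U).
  { intros v. destruct (Rle_dec L v) as [HLv|]; [|exists 0; lra].
    destruct (Rle_dec v U) as [HvU|]; [|exists 0; lra].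
    destruct (exists_nth_window a (U - L) (b * v - L) Hm Hg) as [i [Hi Hc]];
      [nra | nra |].
    exists (nth i a 0). intros _. split; [apply nth_In; exact Hi | lra]. }
  exists (fun v => proj1_sig (constructive_indefinite_description _ (Hpick v))).
  intros v. exact (proj2_sig (constructive_indefinite_description _ (Hpick v))).
Qed.

Lemma conv_Xset_coords n p (l : list (R * C)) :
  List.Forall (fun w => 0 <= fst w /\ Xset n p (snd w)) l ->
  exists t : nat -> R, (forall k, 0 <= t k <= fold_right Rplus 0 (map fst l)) /\
    fold_right Cplus 0%C (map (fun w => Cmult (RtoC (fst w)) (snd w)) l) =
    Csum n (fun k => Cmult (RtoC (t k)) (Cpow (qbase n p) k)).
Proof.
  induction l as [|[lam z] l IH]; intros HF.
  - exists (fun _ => 0). split; [simpl; intros; lra|].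
    simpl. rewrite (Csum_ext _ _ (fun _ => 0%C)); [symmetry; apply Csum_const0|].
    intros. ring.
  - inversion HF as [|? ? [Hlam [x [Hx Hz]]] HF']; subst. simpl in *.
    destruct (IH HF') as [t [Ht Heq]].
    exists (fun k => lam * x k + t k). split.
    + intros k. specialize (Ht k). destruct (Hx k) as [E|E]; rewrite E; split; nra.
    + rewrite Heq, Hz, Csum_scal, <- Csum_plus. apply Csum_ext. intros k _.
      rewrite RtoC_plus, RtoC_mult. ring.
Qed.

Lemma Pset_coords n p y :
  Pset n p y -> exists t : nat -> R, (forall k, 0 <= t k <= 1) /\
    y = Csum n (fun k => Cmult (RtoC (t k)) (Cpow (qbase n p) k)).
Proof.
  intros [l [HF [Hone Hy]]].
  destruct (conv_Xset_coords n p l HF) as [t [Ht Heq]].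
  rewrite Hone in Ht. exists t. split; [exact Ht | rewrite Hy; exact Heq].
Qed.

Definition Cpoly (n : nat) (q : C) (s : nat -> R) : C :=
  Csum n (fun k => Cmult (RtoC (s k)) (Cpow q k)).

(* One step of the expansion on the coefficient vector [s] of [Cpoly n q s]:
   multiply by [q] (using [q ^ n = b]) and subtract the digit [f (s (n - 1))]. *)
Definition carry_step (n : nat) (b : R) (f : R -> R) (s : nat -> R) : nat -> R :=
  fun k => match k with
           | O => b * s (n - 1)%nat - f (s (n - 1)%nat)
           | S k' => s k'
           end.

Lemma Cpoly_carry_step n q b f s :
  (1 <= n)%nat -> Cpow q n = RtoC b ->
  Cpoly n q (carry_step n b f s) = Cminus (Cmult q (Cpoly n q s)) (RtoC (f (s (n - 1)%nat))).
Proof.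
  intros Hn Hq. unfold Cpoly, carry_step.
  destruct n as [|n]; [lia|]. replace (S n - 1)%nat with n by lia.
  rewrite Csum_shift, Csum_S, Cmult_plus_distr_l, Csum_scal.
  rewrite (Csum_ext n _ (fun k => Cmult q (Cmult (RtoC (s k)) (Cpow q k)))).
  2:{ intros k _. simpl. ring. }
  replace (Cmult q (Cmult (RtoC (s n)) (Cpow q n))) with (Cmult (RtoC (s n)) (Cpow q (S n)))
    by (simpl; ring).
  rewrite Hq, RtoC_minus, RtoC_mult. simpl. ring.
Qed.

Lemma Cmod_Cpoly_le n q s M :
  1 <= Cmod q -> (forall k, Rabs (s k) <= M) -> Cmod (Cpoly n q s) <= INR n * (M * Cmod q ^ n).
Proof.
  intros Hq Hs. apply Cmod_Csum_le. intros k Hk.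
  rewrite Cmod_mult, Cmod_R, Cmod_pow.
  apply Rmult_le_compat; [apply Rabs_pos | apply pow_le; lra | apply Hs |].
  apply Rle_pow; [exact Hq | lia].
Qed.

Lemma carry_step_bounded n b f L U s :
  (forall v, L <= v <= U -> L <= b * v - f v <= U) ->
  (forall k, L <= s k <= U) -> forall k, L <= carry_step n b f s k <= U.
Proof. intros Hf Hs [|k]; simpl; [apply Hf|]; apply Hs. Qed.

Lemma expansion_of_recurrence (q : C) (d : nat -> R) (r : nat -> C) :
  q <> 0%C ->
  (forall j, r (S j) = Cminus (Cmult q (r j)) (RtoC (d j))) ->
  forall N, r 0%nat = Cplus (Csum N (fun j => Cmult (RtoC (d j)) (Cinv (Cpow q (S j)))))
                            (Cmult (Cinv (Cpow q N)) (r N)).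
Proof.
  intros Hq Hrec N. induction N as [|N IH].
  - rewrite Csum_0. simpl. field.
  - rewrite IH, Csum_S, Hrec. simpl Cpow. field. split; [apply Cpow_nz |]; exact Hq.
Qed.

Lemma is_series_of_bounded_remainder (c : nat -> C) (q x : C) (r : nat -> C) (B : R) :
  1 < Cmod q -> (forall N, Cmod (r N) <= B) ->
  (forall N, x = Cplus (Csum N c) (Cmult (Cinv (Cpow q N)) (r N))) ->
  is_series c x.
Proof.
  intros Hq Hr Hx.
  assert (HB : 0 <= B) by (eapply Rle_trans; [apply Cmod_ge_0 | apply (Hr 0%nat)]).
  assert (Hpow : forall N, 0 < Cmod (Cpow q N)) by (intros N; rewrite Cmod_pow; apply pow_lt; lra).
  assert (Hq0 : forall N, Cpow q N <> 0%C)
    by (intros N E; specialize (Hpow N); rewrite E, Cmod_0 in Hpow; lra).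
  assert (Hinvq : Rabs (/ Cmod q) < 1).
  { rewrite Rabs_pos_eq by (left; apply Rinv_0_lt_compat; lra).
    rewrite <- Rinv_1. apply Rinv_lt_contravar; lra. }
  apply filterlim_locally. intros eps.
  assert (Heps : 0 < eps / (B + 1)) by (apply Rdiv_lt_0_compat; [apply cond_pos | lra]).
  destruct (pow_lt_1_zero _ Hinvq _ Heps) as [N0 HN0].
  exists N0. intros N HN. apply norm_compat1.
  change (Cmod (Cminus (sum_n c N) x) < eps).
  rewrite sum_n_Csum, (Hx (S N)).
  replace (Cminus (Csum (S N) c) (Cplus (Csum (S N) c) (Cmult (Cinv (Cpow q (S N))) (r (S N)))))
    with (Copp (Cmult (Cinv (Cpow q (S N))) (r (S N)))) by ring.
  rewrite Cmod_opp, Cmod_mult, Cmod_inv by apply Hq0.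
  specialize (HN0 (S N) ltac:(lia)).
  rewrite Rabs_pos_eq, pow_inv, <- Cmod_pow in HN0
    by (apply pow_le; left; apply Rinv_0_lt_compat; lra).
  assert (Hinv0 : 0 <= / Cmod (Cpow q (S N))) by (left; apply Rinv_0_lt_compat, Hpow).
  assert (/ Cmod (Cpow q (S N)) * Cmod (r (S N)) <= eps / (B + 1) * B)
    by (apply Rmult_le_compat; auto; [apply Cmod_ge_0 | lra]).
  assert (eps / (B + 1) * B < eps).
  { destruct eps as [e He]. simpl in *. apply (Rmult_lt_reg_r (B + 1)); [lra|].
    field_simplify; lra. }
  lra.
Qed.

Theorem corollary4p7 (n : nat) (p : R) (a : list R) :
  (1 <= n)%nat -> 1 < p ->
  (1 <= length a)%nat ->
  (forall i, (S i < length a)%nat -> nth i a 0 < nth (S i) a 0) ->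
  let m := length a in
  let minA := nth 0 a 0 in
  let maxA := nth (m - 1) a 0 in
  let q := qbase n p in
  (forall i, (S i < m)%nat ->
     nth (S i) a 0 - nth i a 0 <= (maxA - minA) / (p ^ n - 1)) ->
  forall x : C,
    (exists y : C, Pset n p y /\
       x = Cplus (Cmult (RtoC ((maxA - minA) / (p ^ n - 1))) y)
                 (Cmult (RtoC (1 / (p ^ n - 1))) (Csum n (fun k => Cmult (RtoC minA) (Cpow q k))))) ->
    exists d : nat -> R,
      (forall j, In (d j) a) /\
      is_series (fun j : nat => Cmult (RtoC (d j)) (Cinv (Cpow q (S j)))) x.
Proof.
  intros Hn Hp Hm Hs m minA maxA q Hg x [y [Hy Hx]].
  assert (Hb : 1 < p ^ n) by (apply Rlt_pow_R1; [lra | lia]).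
  assert (Hq : Cmod q = p) by (apply Cmod_qbase; lra).
  assert (HminA : minA <= maxA) by (apply sorted_nth_le; [exact Hs | unfold m; lia | lia]).
  destruct (exists_digit_map a (p ^ n) Hm Hb Hg) as [f Hf].
  fold m minA maxA in Hf. set (L := minA / (p ^ n - 1)) in Hf. set (U := maxA / (p ^ n - 1)) in Hf.
  assert (HLU : L <= U) by (apply Rmult_le_compat_r; [left; apply Rinv_0_lt_compat |]; lra).
  destruct (Pset_coords n p y Hy) as [t [Ht Hyt]].
  set (s := fun j => Nat.iter j (carry_step n (p ^ n) f) (fun k => (U - L) * t k + L)).
  assert (Hbox : forall j k, L <= s j k <= U).
  { induction j as [|j IH]; intros k.
    - specialize (Ht k). simpl. nra.
    - apply carry_step_bounded; [intros v Hv; apply Hf, Hv | exact IH]. }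
  exists (fun j => f (s j (n - 1)%nat)). split; [intros j; apply Hf, Hbox |].
  assert (Hx0 : x = Cpoly n q (s 0%nat)).
  { rewrite Hx, Hyt. unfold Cpoly, q. simpl. rewrite !Csum_scal, <- Csum_plus.
    apply Csum_ext. intros k _.
    replace ((U - L) * t k + L) with ((maxA - minA) / (p ^ n - 1) * t k + 1 / (p ^ n - 1) * minA)
      by (unfold U, L; field; lra).
    rewrite RtoC_plus, !RtoC_mult. ring. }
  apply (is_series_of_bounded_remainder _ q x (fun j => Cpoly n q (s j))
           (INR n * ((Rabs L + Rabs U) * p ^ n))); [lra | |].
  - intros j. rewrite <- Hq. apply Cmod_Cpoly_le; [lra |].
    intros k. specialize (Hbox j k). unfold Rabs. repeat destruct Rcase_abs; lra.
  - rewrite Hx0. apply (expansion_of_recurrence q _ (fun j => Cpoly n q (s j))).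
    + intros E. rewrite E, Cmod_0 in Hq. lra.
    + intros j. apply Cpoly_carry_step; [exact Hn | apply qbase_pow_n, Hn].
Qed.
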